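(* The following are equivalent: (a) $\mathbf{0}\in\mathrm{conv}\,\chi$; (b) for every $\mathbf{x}_i\in\chi$ and every $\mathbf{x}\in\mathcal{D}_{i,\mathrm{DP}}$ one has $\|\mathbf{x}\|\ge\|\mathbf{x}_i\|$. Moreover, when $\mathbf{0}\in\mathrm{conv}\,\chi$, equality $\|\mathbf{x}\|=\|\mathbf{x}_i\|$ with $\mathbf{x}\in\mathcal{D}_{i,\mathrm{DP}}$ holds only for $\mathbf{x}=\mathbf{x}_i$.
   Context: A constellation is a finite set $\chi=\{\mathbf{x}_1,\dots,\mathbf{x}_M\}\subset\mathbb{R}^2$ of distinct points, $M\ge 3$, not all lying on one line. The Voronoi region of $\mathbf{x}_i$ is $\mathcal{D}_{i,\mathrm{ML}}=\{\mathbf{x}\in\mathbb{R}^2:\|\mathbf{x}-\mathbf{x}_i\|\le\|\mathbf{x}-\mathbf{x}_j\|\ \forall j\}$. Two distinct points $\mathbf{x}_i,\mathbf{x}_j$ are neighbors if their Voronoi regions share an edge (a common boundary segment or ray of positive length); $\mathcal{S}_i$ denotes the set of neighbors of $\mathbf{x}_i$. The distance preserving constructive interference region (DPCIR) of $\mathbf{x}_i$ is $\mathcal{D}_{i,\mathrm{DP}}=\{\mathbf{x}\in\mathbb{R}^2:(\mathbf{x}_i-\mathbf{x}_j)^T\mathbf{x}\ge (\mathbf{x}_i-\mathbf{x}_j)^T(\mathbf{x}_i+\mathbf{x}_j)/2+\|\mathbf{x}_i-\mathbf{x}_j\|^2/2\ \forall\mathbf{x}_j\in\mathcal{S}_i\}$,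 equivalently $\{\mathbf{x}:(\mathbf{x}_i-\mathbf{x}_j)^T(\mathbf{x}-\mathbf{x}_i)\ge 0\ \forall\mathbf{x}_j\in\mathcal{S}_i\}$. $\mathrm{conv}\,\chi$ is the convex hull of $\chi$. *)

From Stdlib Require Import Reals Lra.
Open Scope R_scope.

Definition pt := (R * R)%type.

Definition dot (u v : pt) : R := fst u * fst v + snd u * snd v.
Definition vsub (u v : pt) : pt := (fst u - fst v, snd u - snd v).
Definition vadd (u v : pt) : pt := (fst u + fst v, snd u + snd v).
Definition vscale (a : R) (u : pt) : pt := (a * fst u, a * snd u).
Definition norm (u : pt) : R := sqrt (dot u u).

Fixpoint rsum (f : nat -> R) (n : nat) : R :=
  match n with O => 0 | S m => rsum f m + f m end.
Fixpoint vsum (f : nat -> pt) (n : nat) : pt :=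
  match n with O => (0, 0) | S m => vadd (vsum f m) (f m) end.

Definition constellation (M : nat) (X : nat -> pt) : Prop :=
  (3 <= M)%nat /\
  (forall i j, (i < M)%nat -> (j < M)%nat -> X i = X j -> i = j) /\
  ~ (exists a b c : R, (a <> 0 \/ b <> 0) /\
       forall k, (k < M)%nat -> a * fst (X k) + b * snd (X k) = c).

Definition voronoi (M : nat) (X : nat -> pt) (i : nat) (x : pt) : Prop :=
  forall j, (j < M)%nat -> norm (vsub x (X i)) <= norm (vsub x (X j)).

Definition neighbors (M : nat) (X : nat -> pt) (i j : nat) : Prop :=
  X i <> X j /\
  exists a b : pt, a <> b /\
    forall t : R, 0 <= t <= 1 ->
      voronoi M X i (vadd (vscale (1 - t) a) (vscale t b)) /\
      voronoi M X j (vadd (vscale (1 - t) a) (vscale t b)).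

Definition dpcir (M : nat) (X : nat -> pt) (i : nat) (x : pt) : Prop :=
  forall j, (j < M)%nat -> neighbors M X i j ->
    dot (vsub (X i) (X j)) x >=
      dot (vsub (X i) (X j)) (vscale (1/2) (vadd (X i) (X j)))
      + norm (vsub (X i) (X j)) ^ 2 / 2.

Definition in_conv (M : nat) (X : nat -> pt) (y : pt) : Prop :=
  exists w : nat -> R,
    (forall k, (k < M)%nat -> 0 <= w k) /\
    rsum w M = 1 /\
    vsum (fun k => vscale (w k) (X k)) M = y.

(* (a) => (b): for [x] in the DPCIR of [x_i], the vector [x - x_i] makes a
   nonnegative inner product with [x_i - x_j] for every neighbor [x_j].  This
   extends to every site [x_k]: otherwise the ray from [x_i] in direction
   [x - x_i] leaves the Voronoi cell of [x_i], and at the exit point one can move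
   along a direction tangent to the cell boundary, tracing an edge shared with a
   site [x_j] lying ahead of the ray, which is then a neighbor violating the
   hypothesis.  Averaging with convex weights [w] such that [sum_k w_k x_k = 0]
   gives [x_i . (x - x_i) >= 0], hence [|x| >= |x_i|], with equality only at [x_i].
   (b) => (a): if [0] is not in the hull, Gordan's alternative yields [d] with
   [d . x_k < 0] for all [k]; for [x_i] maximizing [d . x_k], the foot of the
   perpendicular from [0] onto the line [x_i + t d] lies in the DPCIR of [x_i]
   and is strictly shorter than [x_i]. *)

From Stdlib Require Import Reals Lra Lia Psatz Classical.
Open Scope R_scope.

Lemma dot_vsub_swap a b v : dot (vsub a b) v = - dot (vsub b a) v.
Proof. destruct a, b, v; unfold dot, vsub; simpl; ring. Qed.

Lemma dot_self_nonneg u : 0 <= dot u u.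
Proof. destruct u; unfold dot; simpl; nra. Qed.

Lemma dot_self_zero u v : dot u u <= 0 -> dot u v = 0.
Proof.
  destruct u as [u1 u2], v; unfold dot; simpl; intros H.
  assert (u1 = 0) by nra; assert (u2 = 0) by nra; subst; ring.
Qed.

Lemma dot_self_pos_of_dot_neg d x : dot d x < 0 -> 0 < dot d d.
Proof.
  destruct d as [d1 d2], x; unfold dot; simpl; intros H.
  destruct (Req_dec d1 0), (Req_dec d2 0); subst; nra.
Qed.

Definition wsum (w : nat -> R) (X : nat -> pt) (n : nat) : pt :=
  vsum (fun k => vscale (w k) (X k)) n.

Definition delta (k : nat) (a : R) (j : nat) : R := if Nat.eqb j k then a else 0.

Lemma rsum_ext f g n : (forall k, (k < n)%nat -> f k = g k) -> rsum f n = rsum g n.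
Proof.
  induction n as [|n IH]; intros H; simpl; [reflexivity|].
  rewrite IH, H; [reflexivity | lia | intros; apply H; lia].
Qed.

Lemma wsum_ext v w X n : (forall k, (k < n)%nat -> v k = w k) -> wsum v X n = wsum w X n.
Proof.
  unfold wsum; induction n as [|n IH]; intros H; simpl; [reflexivity|].
  rewrite IH, H; [reflexivity | lia | intros; apply H; lia].
Qed.

Lemma rsum_add f g n : rsum (fun k => f k + g k) n = rsum f n + rsum g n.
Proof. induction n as [|n IH]; simpl; [|rewrite IH]; ring. Qed.

Lemma rsum_scale c f n : rsum (fun k => c * f k) n = c * rsum f n.
Proof. induction n as [|n IH]; simpl; [|rewrite IH]; ring. Qed.

Lemma rsum_nonneg f n : (forall k, (k < n)%nat -> 0 <= f k) -> 0 <= rsum f n.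
Proof.
  induction n as [|n IH]; intros H; simpl; [lra|].
  assert (0 <= rsum f n) by (apply IH; intros; apply H; lia).
  assert (0 <= f n) by (apply H; lia).
  lra.
Qed.

Lemma wsum_add v w X n :
  wsum (fun k => v k + w k) X n = vadd (wsum v X n) (wsum w X n).
Proof.
  unfold wsum; induction n as [|n IH]; simpl.
  - unfold vadd; simpl; f_equal; ring.
  - rewrite IH. destruct (vsum _ n), (vsum (fun k => vscale (w k) (X k)) n), (X n).
    unfold vadd, vscale; simpl; f_equal; ring.
Qed.

Lemma wsum_scale c w X n : wsum (fun k => c * w k) X n = vscale c (wsum w X n).
Proof.
  unfold wsum; induction n as [|n IH]; simpl.
  - unfold vscale; simpl; f_equal; ring.
  - rewrite IH. destruct (vsum _ n), (X n). unfold vadd, vscale; simpl; f_equal; ring.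
Qed.

Lemma rsum_delta k a n : (k < n)%nat -> rsum (delta k a) n = a.
Proof.
  assert (Hout : forall m, (m <= k)%nat -> rsum (delta k a) m = 0).
  { induction m as [|m IH]; intros Hm; simpl; [reflexivity|].
    rewrite IH by lia. unfold delta. destruct (Nat.eqb_spec m k); [lia|ring]. }
  induction n as [|n IH]; intros Hk; [lia|]. simpl.
  unfold delta at 2. destruct (Nat.eqb_spec n k).
  - subst. rewrite Hout by lia. ring.
  - rewrite IH by lia. ring.
Qed.

Lemma wsum_delta k a X n : (k < n)%nat -> wsum (delta k a) X n = vscale a (X k).
Proof.
  unfold wsum.
  assert (Hout : forall m, (m <= k)%nat -> vsum (fun j => vscale (delta k a j) (X j)) m = (0, 0)).
  { induction m as [|m IH]; intros Hm; simpl; [reflexivity|].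
    rewrite IH by lia. unfold delta. destruct (Nat.eqb_spec m k); [lia|].
    unfold vadd, vscale; simpl; f_equal; ring. }
  induction n as [|n IH]; intros Hk; [lia|]. simpl.
  unfold delta at 2. destruct (Nat.eqb_spec n k).
  - subst. rewrite Hout by lia. unfold vadd, vscale; simpl; f_equal; ring.
  - rewrite IH by lia. unfold vadd, vscale; simpl; f_equal; ring.
Qed.

Lemma dot_wsum d w X n : dot d (wsum w X n) = rsum (fun k => w k * dot d (X k)) n.
Proof.
  unfold wsum; induction n as [|n IH]; simpl.
  - unfold dot; simpl; ring.
  - rewrite <- IH. destruct d, (vsum _ n), (X n). unfold dot, vadd, vscale; simpl; ring.
Qed.

Lemma in_conv_of_weights M X w :
  (forall k, (k < M)%nat -> 0 <= w k) -> 0 < rsum w M -> wsum w X M = (0, 0) ->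
  in_conv M X (0, 0).
Proof.
  intros Hw Hpos H0. exists (fun k => / rsum w M * w k). split; [|split].
  - intros k Hk. apply Rmult_le_pos; [left; apply Rinv_0_lt_compat|apply Hw]; auto.
  - rewrite rsum_scale. field. lra.
  - change (wsum (fun k => / rsum w M * w k) X M = (0, 0)).
    rewrite wsum_scale, H0. unfold vscale; simpl; f_equal; ring.
Qed.

Lemma in_conv_of_three M X k1 k2 k3 a1 a2 a3 :
  (k1 < M)%nat -> (k2 < M)%nat -> (k3 < M)%nat ->
  0 <= a1 -> 0 <= a2 -> 0 <= a3 -> 0 < a1 + a2 + a3 ->
  vadd (vadd (vscale a1 (X k1)) (vscale a2 (X k2))) (vscale a3 (X k3)) = (0, 0) ->
  in_conv M X (0, 0).
Proof.
  intros H1 H2 H3 Ha1 Ha2 Ha3 Hpos H0.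
  apply in_conv_of_weights with (fun j => delta k1 a1 j + delta k2 a2 j + delta k3 a3 j).
  - intros j _. unfold delta.
    destruct (Nat.eqb j k1), (Nat.eqb j k2), (Nat.eqb j k3); lra.
  - rewrite !rsum_add, !rsum_delta; auto.
  - rewrite !wsum_add, !wsum_delta; auto.
Qed.

Lemma in_conv_S n X y : in_conv n X y -> in_conv (S n) X y.
Proof.
  intros [w [Hw [Hsum Hy]]].
  assert (Hext : forall k, (k < n)%nat -> (if Nat.eqb k n then 0 else w k) = w k).
  { intros k Hk. destruct (Nat.eqb_spec k n); [lia|reflexivity]. }
  exists (fun k => if Nat.eqb k n then 0 else w k). split; [|split].
  - intros k Hk. destruct (Nat.eqb_spec k n); [lra|apply Hw; lia].
  - simpl. rewrite Nat.eqb_refl, (rsum_ext _ w), Hsum by exact Hext. ring.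
  - change (wsum (fun k => if Nat.eqb k n then 0 else w k) X (S n) = y).
    unfold wsum; simpl. fold (wsum (fun k => if Nat.eqb k n then 0 else w k) X n).
    rewrite (wsum_ext _ w) by exact Hext. unfold wsum; rewrite Hy, Nat.eqb_refl.
    destruct y; unfold vadd, vscale; simpl; f_equal; ring.
Qed.

Lemma small_multiple_le n (a b : nat -> R) :
  (forall k, (k < n)%nat -> 0 <= a k /\ (a k = 0 -> b k <= 0)) ->
  exists e, 0 < e /\ forall k, (k < n)%nat -> e * b k <= a k.
Proof.
  induction n as [|n IH]; intros H.
  { exists 1; split; [lra|]; intros; lia. }
  destruct IH as [e [He Hle]]; [intros; apply H; lia|].
  destruct (H n ltac:(lia)) as [Ha0 Ha1].
  destruct (Rle_dec (b n) 0) as [Hb|Hb].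
  - exists e; split; auto. intros k Hk.
    destruct (Nat.eq_dec k n); [subst; nra|apply Hle; lia].
  - assert (Hapos : 0 < a n) by (destruct Ha0 as [|E]; [|specialize (Ha1 (eq_sym E))]; lra).
    exists (Rmin e (a n / b n)). split.
    + apply Rmin_glb_lt; [lra|apply Rdiv_lt_0_compat; lra].
    + assert (Hmin1 := Rmin_l e (a n / b n)); assert (Hmin2 := Rmin_r e (a n / b n)).
      assert (Hpos : 0 < Rmin e (a n / b n)) by (apply Rmin_glb_lt; [lra|apply Rdiv_lt_0_compat; lra]).
      intros k Hk. destruct (Nat.eq_dec k n) as [->|Hkn].
      * assert (a n / b n * b n = a n) by (field; lra). nra.
      * specialize (Hle k ltac:(lia)). destruct (H k ltac:(lia)).
        destruct (Rle_dec (b k) 0); nra.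
Qed.

Lemma small_multiple_lt n (a b : nat -> R) :
  (forall k, (k < n)%nat -> a k < 0) ->
  exists e, 0 < e /\ forall k, (k < n)%nat -> a k + e * b k < 0.
Proof.
  intros H.
  destruct (small_multiple_le n (fun k => - a k / 2) b) as [e [He Hle]].
  { intros k Hk. specialize (H k Hk). split; intros; lra. }
  exists e; split; auto. intros k Hk. specialize (H k Hk); specialize (Hle k Hk). lra.
Qed.

Lemma argmin_ex (P : nat -> Prop) (f : nat -> R) n :
  (exists k, (k < n)%nat /\ P k) ->
  exists j, (j < n)%nat /\ P j /\ forall k, (k < n)%nat -> P k -> f j <= f k.
Proof.
  induction n as [|n IH]; intros [k [Hk Pk]]; [lia|].
  destruct (classic (exists k, (k < n)%nat /\ P k)) as [Hex|Hnone].
  - destruct (IH Hex) as [j [Hj [Pj Hmin]]].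
    destruct (classic (P n /\ f n < f j)) as [[Pn Hlt]|Hnot].
    + exists n. repeat split; auto. intros k' Hk' Pk'.
      destruct (Nat.eq_dec k' n) as [->|]; [lra|].
      specialize (Hmin k' ltac:(lia) Pk'); lra.
    + exists j. repeat split; [lia|exact Pj|]. intros k' Hk' Pk'.
      destruct (Nat.eq_dec k' n) as [->|]; [|apply Hmin; [lia|exact Pk']].
      apply Rnot_lt_le; intro; apply Hnot; auto.
  - assert (k = n) as ->.
    { destruct (Nat.eq_dec k n); [assumption|]. exfalso; apply Hnone; exists k; split; [lia|exact Pk]. }
    exists n. repeat split; auto. intros k' Hk' Pk'.
    destruct (Nat.eq_dec k' n) as [->|]; [lra|].
    exfalso; apply Hnone; exists k'; split; [lia|exact Pk'].
Qed.

Definition rot (u : pt) : pt := (- snd u, fst u).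

Definition perp_comb (d p x : pt) : pt := vsub (vscale (dot d p) x) (vscale (dot d x) p).

Lemma dot_perp_comb d p x : dot d (perp_comb d p x) = 0.
Proof. destruct d, p, x; unfold perp_comb, dot, vsub, vscale; simpl; ring. Qed.

Lemma rot_decomp d y : dot d y = 0 -> vscale (dot d d) y = vscale (dot (rot d) y) (rot d).
Proof.
  destruct d as [d1 d2], y as [y1 y2]; unfold dot, rot, vscale; simpl; intros H.
  f_equal; [apply Rminus_diag_uniq; transitivity (d1 * (d1 * y1 + d2 * y2))
           |apply Rminus_diag_uniq; transitivity (d2 * (d1 * y1 + d2 * y2))];
    (ring || (rewrite H; ring)).
Qed.

Lemma perp_rot_zero d y : 0 < dot d d -> dot d y = 0 -> dot (rot d) y = 0 -> y = (0, 0).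
Proof.
  intros Hd H0 H1. assert (E := rot_decomp d y H0). rewrite H1 in E.
  destruct y as [y1 y2]; unfold vscale in E; simpl in E. injection E as E1 E2.
  f_equal; apply (Rmult_eq_reg_l (dot d d)); lra.
Qed.

Lemma perp_cross_zero d u v : 0 < dot d d -> dot d u = 0 -> dot d v = 0 ->
  vsub (vscale (dot (rot d) u) v) (vscale (dot (rot d) v) u) = (0, 0).
Proof.
  intros Hd Hu Hv.
  assert (Eu := rot_decomp d u Hu); assert (Ev := rot_decomp d v Hv).
  set (dd := dot d d) in *; set (su := dot (rot d) u) in *; set (sv := dot (rot d) v) in *.
  destruct u as [u1 u2], v as [v1 v2], (rot d) as [r1 r2].
  unfold vscale, vsub in *; simpl in *.
  injection Eu as Eu1 Eu2; injection Ev as Ev1 Ev2.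
  f_equal; apply (Rmult_eq_reg_l dd); try lra.
  - replace (dd * (su * v1 - sv * u1)) with (su * (dd * v1) - sv * (dd * u1)) by ring.
    rewrite Eu1, Ev1; ring.
  - replace (dd * (su * v2 - sv * u2)) with (su * (dd * v2) - sv * (dd * u2)) by ring.
    rewrite Eu2, Ev2; ring.
Qed.

Section GordanStep.
Variables (n : nat) (X : nat -> pt) (d : pt).
Hypothesis Hd : forall k, (k < n)%nat -> dot d (X k) < 0.
Hypothesis Hp : 0 <= dot d (X n).

Lemma in_conv_of_null_perp_comb k :
  (k < n)%nat -> perp_comb d (X n) (X k) = (0, 0) -> in_conv (S n) X (0, 0).
Proof.
  intros Hk H0. assert (Hdk := Hd k Hk).
  apply (in_conv_of_three _ _ k n n (dot d (X n)) (- dot d (X k)) 0); try lia; try lra.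
  rewrite <- H0. destruct (X k), (X n). unfold perp_comb, vadd, vsub, vscale; simpl; f_equal; ring.
Qed.

Lemma in_conv_of_opposite_perp_combs k l :
  (k < n)%nat -> (l < n)%nat ->
  0 < dot (rot d) (perp_comb d (X n) (X k)) -> dot (rot d) (perp_comb d (X n) (X l)) <= 0 ->
  in_conv (S n) X (0, 0).
Proof.
  intros Hk Hl.
  set (sk := dot (rot d) (perp_comb d (X n) (X k))).
  set (sl := dot (rot d) (perp_comb d (X n) (X l))).
  intros Hsk Hsl. assert (Hdk := Hd k Hk); assert (Hdl := Hd l Hl).
  assert (Hdd := dot_self_pos_of_dot_neg _ _ Hdk).
  apply (in_conv_of_three _ _ l k n (sk * dot d (X n)) (- sl * dot d (X n))
           (- sk * dot d (X l) + sl * dot d (X k))); try lia; try nra.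
  rewrite <- (perp_cross_zero d _ _ Hdd (dot_perp_comb d (X n) (X k)) (dot_perp_comb d (X n) (X l))).
  fold sk sl. destruct (X k), (X l), (X n).
  unfold perp_comb, vadd, vsub, vscale; simpl; f_equal; ring.
Qed.

End GordanStep.

Lemma strict_halfplane_of_perp_combs n X d f :
  X n <> (0, 0) -> (forall k, (k < n)%nat -> dot f (perp_comb d (X n) (X k)) < 0) ->
  exists d', forall k, (k < S n)%nat -> dot d' (X k) < 0.
Proof.
  intros Hp Hf.
  set (d0 := vsub (vscale (dot d (X n)) f) (vscale (dot f (X n)) d)).
  destruct (small_multiple_lt n _ (fun k => - dot (X n) (X k)) Hf) as [e [He Hlt]].
  exists (vsub d0 (vscale e (X n))). intros k Hk.
  destruct (Nat.eq_dec k n) as [->|Hkn].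
  - assert (Hpp : 0 < dot (X n) (X n)).
    { destruct (X n) as [p1 p2]; unfold dot; simpl.
      destruct (Req_dec p1 0), (Req_dec p2 0); subst; [congruence|nra..]. }
    replace (dot (vsub d0 (vscale e (X n))) (X n)) with (- e * dot (X n) (X n))
      by (unfold d0; destruct d, f, (X n); unfold dot, vsub, vscale; simpl; ring).
    nra.
  - specialize (Hlt k ltac:(lia)). simpl in Hlt.
    replace (dot (vsub d0 (vscale e (X n))) (X k))
      with (dot f (perp_comb d (X n) (X k)) + e * - dot (X n) (X k))
      by (unfold d0, perp_comb; destruct d, f, (X n), (X k); unfold dot, vsub, vscale; simpl; ring).
    exact Hlt.
Qed.

(* The vectors [perp_comb d (X n) (X k)] are nonnegative combinations of [X k]
   and [X n] on the line orthogonal to [d]: either one of them vanishes or two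
   point in opposite directions, putting [0] in the hull, or all lie on one open
   half-line, and a direction strictly negative on them is tilted away from [X n]. *)
Lemma gordan_step n X d :
  (forall k, (k < n)%nat -> dot d (X k) < 0) -> 0 <= dot d (X n) ->
  in_conv (S n) X (0, 0) \/ exists d', forall k, (k < S n)%nat -> dot d' (X k) < 0.
Proof.
  intros Hd Hp.
  destruct (classic (X n = (0, 0))) as [H0|Hpnz].
  { left. apply (in_conv_of_three _ _ n n n 1 0 0); try lia; try lra.
    rewrite H0; unfold vadd, vscale; simpl; f_equal; ring. }
  set (s := fun k => dot (rot d) (perp_comb d (X n) (X k))).
  destruct (classic (forall k, (k < n)%nat -> s k < 0)) as [Hneg|Hneg].
  { right. exact (strict_halfplane_of_perp_combs n X d (rot d) Hpnz Hneg). }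
  destruct (classic (forall k, (k < n)%nat -> 0 < s k)) as [Hpos|Hpos].
  { right. apply (strict_halfplane_of_perp_combs n X d (vscale (-1) (rot d)) Hpnz).
    intros k Hk. specialize (Hpos k Hk). unfold s in Hpos.
    destruct (rot d), (perp_comb d (X n) (X k)); unfold dot, vscale in *; simpl in *; lra. }
  left.
  destruct (not_all_ex_not _ _ Hneg) as [k Hk]; apply imply_to_and in Hk as [Hk Hsk].
  destruct (not_all_ex_not _ _ Hpos) as [l Hl]; apply imply_to_and in Hl as [Hl Hsl].
  apply Rnot_lt_le in Hsk; apply Rnot_lt_le in Hsl.
  destruct (Req_dec (s k) 0) as [Hs0|Hs0].
  - apply (in_conv_of_null_perp_comb n X d Hd Hp k Hk).
    apply (perp_rot_zero d (perp_comb d (X n) (X k))); [|apply dot_perp_comb|exact Hs0].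
    exact (dot_self_pos_of_dot_neg _ _ (Hd k Hk)).
  - apply (in_conv_of_opposite_perp_combs n X d Hd Hp k l); auto; fold (s k) (s l); lra.
Qed.

Lemma gordan n X :
  in_conv n X (0, 0) \/ exists d, forall k, (k < n)%nat -> dot d (X k) < 0.
Proof.
  induction n as [|n [Hc|[d Hd]]].
  - right. exists (0, 0). intros; lia.
  - left. apply in_conv_S, Hc.
  - destruct (Rlt_dec (dot d (X n)) 0) as [Hlt|Hge].
    + right. exists d. intros k Hk.
      destruct (Nat.eq_dec k n) as [->|]; [exact Hlt|apply Hd; lia].
    + apply (gordan_step n X d Hd); lra.
Qed.

Definition sqdist (u v : pt) : R := dot (vsub u v) (vsub u v).

Definition gap (y a b : pt) : R := sqdist y b - sqdist y a.

Lemma gap_shift y s v a b :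
  gap (vadd y (vscale s v)) a b = gap y a b - 2 * s * dot (vsub b a) v.
Proof. destruct y, v, a, b; unfold gap, sqdist, dot, vsub, vadd, vscale; simpl; ring. Qed.

Lemma gap_ray a t d b :
  gap (vadd a (vscale t d)) a b = dot (vsub b a) (vsub b a) - 2 * t * dot (vsub b a) d.
Proof.
  rewrite gap_shift. destruct a, b; unfold gap, sqdist, dot, vsub; simpl; ring.
Qed.

Lemma voronoi_of_gap M X i y :
  (forall k, (k < M)%nat -> 0 <= gap y (X i) (X k)) -> voronoi M X i y.
Proof.
  intros H k Hk. specialize (H k Hk). unfold gap, sqdist in H.
  apply sqrt_le_1_alt. lra.
Qed.

Lemma dot_shear u d w c : dot u d <> 0 ->
  dot u (vadd (vscale (- c) d) w) = (dot u w / dot u d - c) * dot u d.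
Proof. destruct u, d, w; unfold dot, vadd, vscale; simpl; intros H. field; exact H. Qed.

Section VoronoiCell.
Variables (M : nat) (X : nat -> pt) (i : nat).

Lemma neighbors_of_tangent y j v :
  (j < M)%nat -> X i <> X j -> v <> (0, 0) ->
  (forall k, (k < M)%nat -> 0 <= gap y (X i) (X k)) ->
  gap y (X i) (X j) = 0 -> dot (vsub (X j) (X i)) v = 0 ->
  (forall k, (k < M)%nat -> gap y (X i) (X k) = 0 -> dot (vsub (X k) (X i)) v <= 0) ->
  neighbors M X i j.
Proof.
  intros Hj Hij Hv Hy Hyj Hjv Htied.
  destruct (small_multiple_le M (fun k => gap y (X i) (X k))
              (fun k => 2 * dot (vsub (X k) (X i)) v)) as [e [He Hle]].
  { intros k Hk; split; [apply Hy, Hk|]. intros H0; specialize (Htied k Hk H0); lra. }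
  assert (Hseg : forall t, 0 <= t <= 1 -> forall k, (k < M)%nat ->
            0 <= gap (vadd y (vscale (t * e) v)) (X i) (X k)).
  { intros t Ht k Hk. rewrite gap_shift.
    specialize (Hle k Hk); specialize (Hy k Hk); simpl in Hle.
    destruct (Rle_dec (dot (vsub (X k) (X i)) v) 0); nra. }
  split; [exact Hij|]. exists y, (vadd y (vscale e v)). split.
  - intro E. apply Hv. destruct y as [y1 y2], v as [v1 v2].
    unfold vadd, vscale in E; simpl in E. injection E as E1 E2.
    f_equal; apply (Rmult_eq_reg_l e); lra.
  - intros t Ht.
    replace (vadd (vscale (1 - t) y) (vscale t (vadd y (vscale e v))))
      with (vadd y (vscale (t * e) v))
      by (destruct y, v; unfold vadd, vscale; simpl; f_equal; ring).
    assert (Htj : gap (vadd y (vscale (t * e) v)) (X i) (X j) = 0)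
      by (rewrite gap_shift, Hyj, Hjv; ring).
    split; apply voronoi_of_gap; intros k Hk; specialize (Hseg t Ht k Hk);
      unfold gap in *; lra.
Qed.

Lemma ray_exits_cell d :
  (exists k, (k < M)%nat /\ 0 < dot (vsub (X k) (X i)) d) ->
  exists t j, 0 <= t /\ (j < M)%nat /\ 0 < dot (vsub (X j) (X i)) d /\
    gap (vadd (X i) (vscale t d)) (X i) (X j) = 0 /\
    forall k, (k < M)%nat -> 0 <= gap (vadd (X i) (vscale t d)) (X i) (X k).
Proof.
  intros Hex.
  set (exit_time := fun k => dot (vsub (X k) (X i)) (vsub (X k) (X i))
                             / (2 * dot (vsub (X k) (X i)) d)).
  destruct (argmin_ex (fun k => 0 < dot (vsub (X k) (X i)) d) exit_time M Hex)
    as [j [Hj [Pj Hmin]]].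
  assert (Ht : 0 <= exit_time j).
  { unfold exit_time, Rdiv. apply Rmult_le_pos; [apply dot_self_nonneg|].
    left; apply Rinv_0_lt_compat; lra. }
  exists (exit_time j), j. repeat split; auto.
  - rewrite gap_ray. unfold exit_time. field. lra.
  - intros k Hk. rewrite gap_ray.
    assert (Hnn := dot_self_nonneg (vsub (X k) (X i))).
    destruct (Rlt_dec 0 (dot (vsub (X k) (X i)) d)) as [P|nP]; [|nra].
    assert (Htk := Hmin k Hk P).
    assert (exit_time k * (2 * dot (vsub (X k) (X i)) d)
            = dot (vsub (X k) (X i)) (vsub (X k) (X i))) by (unfold exit_time; field; lra).
    nra.
Qed.

Lemma tangent_at_exit t d j0 :
  0 <= t -> (j0 < M)%nat -> 0 < dot (vsub (X j0) (X i)) d ->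
  gap (vadd (X i) (vscale t d)) (X i) (X j0) = 0 ->
  exists j v, (j < M)%nat /\ 0 < dot (vsub (X j) (X i)) d /\
    gap (vadd (X i) (vscale t d)) (X i) (X j) = 0 /\ v <> (0, 0) /\
    dot (vsub (X j) (X i)) v = 0 /\
    forall k, (k < M)%nat -> gap (vadd (X i) (vscale t d)) (X i) (X k) = 0 ->
      dot (vsub (X k) (X i)) v <= 0.
Proof.
  intros Ht Hj0 Hdj0 Hgj0.
  set (y := vadd (X i) (vscale t d)) in *.
  set (w := (snd d, - fst d)).
  (* [j] has the largest slope among the tied sites ahead of the ray, so [v],
     which runs along the bisector of [X i] and [X j], moves weakly away from
     every other tied site. *)
  set (slope := fun k => dot (vsub (X k) (X i)) w / dot (vsub (X k) (X i)) d).
  destruct (argmin_ex (fun k => 0 < dot (vsub (X k) (X i)) d /\ gap y (X i) (X k) = 0)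
              (fun k => - slope k) M) as [j [Hj [[Pj Gj] Hmax]]].
  { exists j0; auto. }
  set (v := vadd (vscale (- slope j) d) w).
  assert (Hv : forall k, dot (vsub (X k) (X i)) d <> 0 ->
            dot (vsub (X k) (X i)) v = (slope k - slope j) * dot (vsub (X k) (X i)) d).
  { intros k Hk. unfold v, slope. apply dot_shear, Hk. }
  exists j, v. repeat split; auto.
  - intro E. assert (Hvw : dot v w = dot d d)
      by (unfold v, w; destruct d; unfold dot, vadd, vscale; simpl; ring).
    rewrite E in Hvw. unfold dot at 1 in Hvw; simpl in Hvw.
    assert (0 < dot d d).
    { apply (dot_self_pos_of_dot_neg _ (vscale (-1) (vsub (X j) (X i)))).
      destruct d, (vsub (X j) (X i)); unfold dot, vscale in *; simpl in *; lra. }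
    lra.
  - rewrite Hv by lra. ring.
  - intros k Hk Gk.
    destruct (Rlt_dec 0 (dot (vsub (X k) (X i)) d)) as [P|nP].
    + assert (Hm := Hmax k Hk (conj P Gk)). rewrite Hv by lra. nra.
    + unfold y in Gk; rewrite gap_ray in Gk.
      assert (Hnn := dot_self_nonneg (vsub (X k) (X i))).
      rewrite dot_self_zero; [lra|nra].
Qed.

Lemma dot_nonneg_of_neighbors d :
  (forall j, (j < M)%nat -> neighbors M X i j -> dot (vsub (X i) (X j)) d >= 0) ->
  forall k, (k < M)%nat -> dot (vsub (X i) (X k)) d >= 0.
Proof.
  intros Hn k Hk. apply Rnot_lt_ge; intro Hneg.
  destruct (ray_exits_cell d) as [t [j0 [Ht [Hj0 [Hdj0 [Hgj0 Hcell]]]]]].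
  { exists k; split; [exact Hk|]. rewrite dot_vsub_swap in Hneg; lra. }
  destruct (tangent_at_exit t d j0 Ht Hj0 Hdj0 Hgj0)
    as [j [v [Hj [Hdj [Hgj [Hv [Hjv Htied]]]]]]].
  assert (Hnb : neighbors M X i j).
  { apply (neighbors_of_tangent (vadd (X i) (vscale t d)) j v); auto.
    intro E. rewrite E in Hdj. destruct (X j), d; unfold dot, vsub in Hdj; simpl in Hdj; lra. }
  specialize (Hn j Hj Hnb). rewrite dot_vsub_swap in Hn. lra.
Qed.

End VoronoiCell.

Lemma dpcir_iff M X i x :
  dpcir M X i x <->
  forall j, (j < M)%nat -> neighbors M X i j -> dot (vsub (X i) (X j)) (vsub x (X i)) >= 0.
Proof.
  assert (Hsq : forall u, norm u ^ 2 = dot u u).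
  { intro u. unfold norm. rewrite <- Rsqr_pow2. apply Rsqr_sqrt, dot_self_nonneg. }
  split; intros H j Hj Hnb; specialize (H j Hj Hnb); rewrite Hsq in *;
    destruct (X i), (X j), x; unfold dot, vsub, vadd, vscale in *; simpl in *; lra.
Qed.

Lemma dot_nonneg_of_in_conv M X i d :
  in_conv M X (0, 0) -> (forall k, (k < M)%nat -> dot (vsub (X i) (X k)) d >= 0) ->
  dot (X i) d >= 0.
Proof.
  intros [w [Hw [Hsum H0]]] H.
  change (wsum w X M = (0, 0)) in H0.
  assert (Havg : 0 <= rsum (fun k => w k * dot (vsub (X i) (X k)) d) M).
  { apply rsum_nonneg. intros k Hk. specialize (H k Hk); specialize (Hw k Hk). nra. }
  rewrite (rsum_ext _ (fun k => dot (X i) d * w k + -1 * (w k * dot d (X k)))) in Havg.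
  - rewrite rsum_add, !rsum_scale, <- dot_wsum, H0, Hsum in Havg.
    unfold dot at 2 in Havg; simpl in Havg. lra.
  - intros k _. destruct (X i), (X k), d; unfold dot, vsub; simpl; ring.
Qed.

Lemma norm_le_of_obtuse a x :
  dot a (vsub x a) >= 0 -> norm a <= norm x /\ (norm x = norm a -> x = a).
Proof.
  intros H.
  assert (Hxx : dot x x = dot a a + 2 * dot a (vsub x a) + dot (vsub x a) (vsub x a))
    by (destruct a, x; unfold dot, vsub; simpl; ring).
  assert (Hnn := dot_self_nonneg (vsub x a)).
  split.
  - apply sqrt_le_1_alt. lra.
  - intros Heq. apply sqrt_inj in Heq; try apply dot_self_nonneg.
    assert (Hz : dot (vsub x a) (vsub x a) <= 0) by lra.
    assert (E1 := dot_self_zero _ (1, 0) Hz); assert (E2 := dot_self_zero _ (0, 1) Hz).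
    destruct a, x; unfold dot, vsub in *; simpl in *. f_equal; lra.
Qed.

Lemma dpcir_closer_to_origin M X d :
  (0 < M)%nat -> (forall k, (k < M)%nat -> dot d (X k) < 0) ->
  exists i x, (i < M)%nat /\ dpcir M X i x /\ norm x < norm (X i).
Proof.
  intros HM Hd.
  destruct (argmin_ex (fun _ => True) (fun k => - dot d (X k)) M) as [i [Hi [_ Hmax]]].
  { exists 0%nat; split; auto. }
  assert (Hdi := Hd i Hi).
  assert (Hdd := dot_self_pos_of_dot_neg _ _ Hdi).
  set (t := - dot d (X i) / dot d d).
  assert (Ht : 0 < t) by (apply Rdiv_lt_0_compat; lra).
  assert (Htd : t * dot d d = - dot d (X i)) by (unfold t; field; lra).
  exists i, (vadd (X i) (vscale t d)). split; [exact Hi|split].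
  - apply dpcir_iff. intros j Hj _. specialize (Hmax j Hj I).
    replace (dot (vsub (X i) (X j)) (vsub (vadd (X i) (vscale t d)) (X i)))
      with (t * (dot d (X i) - dot d (X j)))
      by (destruct (X i), (X j), d; unfold dot, vsub, vadd, vscale; simpl; ring).
    nra.
  - apply sqrt_lt_1_alt. split; [apply dot_self_nonneg|].
    replace (dot (vadd (X i) (vscale t d)) (vadd (X i) (vscale t d)))
      with (dot (X i) (X i) + 2 * t * dot d (X i) + t * (t * dot d d))
      by (destruct (X i), d; unfold dot, vadd, vscale; simpl; ring).
    rewrite Htd. nra.
Qed.

Theorem lemma3 (M : nat) (X : nat -> pt) (HX : constellation M X) :
  (in_conv M X (0, 0) <->
     (forall i x, (i < M)%nat -> dpcir M X i x -> norm x >= norm (X i))) /\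
  (in_conv M X (0, 0) ->
     forall i x, (i < M)%nat -> dpcir M X i x -> norm x = norm (X i) -> x = X i).
Proof.
  assert (Hobtuse : in_conv M X (0, 0) -> forall i x, (i < M)%nat -> dpcir M X i x ->
            dot (X i) (vsub x (X i)) >= 0).
  { intros Hc i x Hi Hx. apply (dot_nonneg_of_in_conv M X i); [exact Hc|].
    apply dot_nonneg_of_neighbors. now apply dpcir_iff. }
  split; [split|].
  - intros Hc i x Hi Hx. apply Rle_ge, (norm_le_of_obtuse _ _ (Hobtuse Hc i x Hi Hx)).
  - intros Hge. destruct (gordan M X) as [Hc|[d Hd]]; [exact Hc|exfalso].
    destruct HX as [HM _].
    destruct (dpcir_closer_to_origin M X d ltac:(lia) Hd) as [i [x [Hi [Hx Hlt]]]].
    specialize (Hge i x Hi Hx). lra.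
  - intros Hc i x Hi Hx. apply (norm_le_of_obtuse _ _ (Hobtuse Hc i x Hi Hx)).
Qed.
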